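(* Let $m\ge1$ and $A=(a_0,\ldots,a_m)$ real with $a_0,a_m\ne0$. Suppose $\omega\in\mathbb{C}$ satisfies $P_A(\omega)=0$ and $|\omega|>1$. Then for every $\varepsilon>0$ there exists $n_0$ such that for every $n>n_0$ the polynomial $T_{n,A}$ has a (complex) root $\xi$ with $\left|\xi-\tfrac12(\omega+\omega^{-1})\right|<\varepsilon$.
   Context: $T_k$ denotes the Chebyshev polynomial of the first kind, $T_k(\cos\theta)=\cos k\theta$. For $A=(a_0,\ldots,a_m)$ real with $a_0,a_m\ne0$ and $n\ge m$, $T_{n,A}(x)=\sum_{i=0}^m a_iT_{n-i}(x)$ and $P_A(x)=\sum_{i=0}^m a_ix^{m-i}$. *)

From HB Require Import structures.
From mathcomp Require Import all_boot all_order all_algebra.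
Set Implicit Arguments. Unset Strict Implicit. Unset Printing Implicit Defensive.
Import Order.TTheory GRing.Theory Num.Theory.
Local Open Scope ring_scope.

(* Chebyshev polynomials of the first kind, via the standard recurrence
   T_0 = 1, T_1 = X, T_(k+2) = 2 X T_(k+1) - T_k
   (equivalently T_k(cos t) = cos (k t)). *)
Fixpoint cheb_pair (R : nzRingType) (k : nat) : {poly R} * {poly R} :=
  match k with
  | 0 => (1, 'X)
  | k'.+1 => let (p, q) := cheb_pair R k' in (q, 2%:R *: 'X * q - p)
  end.

Definition chebT (R : nzRingType) (k : nat) : {poly R} := (cheb_pair R k).1.

Definition TnA (R : nzRingType) (m n : nat) (a : nat -> R) : {poly R} :=
  \sum_(i < m.+1) a i *: chebT R (n - i).

Definition PA (R : nzRingType) (m : nat) (a : nat -> R) : {poly R} :=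
  \sum_(i < m.+1) a i *: 'X^(m - i).

From HB Require Import structures.
From mathcomp Require Import all_boot all_order all_algebra.
From mathcomp Require Import ring zify.
Import Order.TTheory GRing.Theory Num.Theory.
Set Implicit Arguments. Unset Strict Implicit. Unset Printing Implicit Defensive.
Local Open Scope ring_scope.

(* Write J(z) = (z + 1/z)/2.  Since 2 T_k(J z) = z^k + z^-k, multiplying
   2 T_{n,A}(J z) by z^n gives the lacunary polynomial
       F_N = X^N P_A + R_A,   N = 2n - m,   R_A(X) = sum_i a_i X^i,
   so every nonzero root z of F_N yields the root J(z) of T_{n,A}.

   It therefore suffices to show that F_N has a root near w once N is
   large, which holds for any P with P(w) = 0, |w| > 1 and any R.  Shift
   g = F_N(X + w): its constant term R(w) does not depend on N, while if w
   is a root of multiplicity k of P = (X - w)^k q, the k-th coefficient of g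
   is w^N q(w) + O(1), which grows like |w|^N.  For a polynomial of degree
   d whose roots all have modulus >= e, Vieta-type bounds give
   |g_k| e^k <= d^k |g_0|; as |w|^N beats the polynomial (2N)^k, g must
   have a root of modulus < e.  Finally J is 1-Lipschitz on pairs z, w with
   |z w| >= 1, which transfers the estimate to the root J(z). *)

Lemma chebT0 (R : nzRingType) : chebT R 0 = 1. Proof. by []. Qed.
Lemma chebT1 (R : nzRingType) : chebT R 1 = 'X. Proof. by []. Qed.
Lemma chebTSS (R : nzRingType) (k : nat) :
  chebT R k.+2 = 2%:R *: 'X * chebT R k.+1 - chebT R k.
Proof. by rewrite /chebT /=; case: (cheb_pair R k). Qed.

Section Joukowski.
Variable C : numFieldType.
Definition joukowski (z : C) : C := (z + z^-1) / 2%:R.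

Lemma cheb_joukowski (z : C) (k : nat) : z != 0 ->
  2%:R * (chebT C k).[joukowski z] = z ^+ k + z ^- k.
Proof.
move=> z0; have h2 : (2%:R : C) != 0 by rewrite pnatr_eq0.
suff: 2%:R * (chebT C k).[joukowski z] = z ^+ k + z ^- k /\
      2%:R * (chebT C k.+1).[joukowski z] = z ^+ k.+1 + z ^- k.+1 by case.
elim: k => [|k [IHk IHk1]].
  rewrite chebT0 chebT1 hornerC hornerX /joukowski expr0 invr1 expr1; split.
    by rewrite mulr1.
  by field.
split => //; rewrite chebTSS hornerD hornerN hornerM hornerZ hornerX.
have -> : 2%:R * (2%:R * joukowski z * (chebT C k.+1).[joukowski z] - (chebT C k).[joukowski z])
  = (z + z^-1) * (2%:R * (chebT C k.+1).[joukowski z]) - 2%:R * (chebT C k).[joukowski z].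
  by rewrite /joukowski; field.
rewrite IHk IHk1 !exprS !invfM.
have zk : z ^+ k != 0 by rewrite expf_neq0.
by field; rewrite zk z0.
Qed.

(* J z - J w = (z - w)(1 - 1/(zw))/2, so J is 1-Lipschitz where |zw| >= 1. *)
Lemma joukowski_dist (z w : C) : z != 0 -> w != 0 -> 1 <= `|z * w| ->
  `|joukowski z - joukowski w| <= `|z - w|.
Proof.
move=> z0 w0 zw1.
have -> : joukowski z - joukowski w = (z - w) * ((1 - (z * w)^-1) / 2%:R).
  by rewrite /joukowski; field; rewrite z0 w0.
rewrite normrM -[leRHS]mulr1 ler_wpM2l // normrM normfV normr_nat.
rewrite ler_pdivrMr ?ltr0n // mul1r (le_trans (ler_normB _ _)) // normr1 normfV.
by rewrite (_ : 2%:R = 1 + 1 :> C) // lerD2l invf_le1 // (lt_le_trans ltr01 zw1).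
Qed.
End Joukowski.

(* The reversed polynomial R_A(X) = sum_i a_i X^i = X^m P_A(1/X). *)
Definition revPA (R : nzRingType) (m : nat) (a : nat -> R) : {poly R} :=
  \sum_(i < m.+1) a i *: 'X^i.

(* Each term a_i T_{n-i}(J z) z^n contributes a_i z^(2n-i) + a_i z^i. *)
Lemma TnA_joukowski (C : numFieldType) (m n : nat) (a : nat -> C) (z : C) :
  z != 0 -> (m <= n)%N ->
  2%:R * (TnA m n a).[joukowski z] * z ^+ n =
  ('X^(2 * n - m) * PA m a + revPA m a).[z].
Proof.
move=> z0 mn; rewrite /TnA /PA /revPA hornerD hornerM hornerXn !horner_sum.
rewrite mulr_sumr mulr_suml mulr_sumr -big_split /=; apply: eq_bigr => i _.
have im : (i <= m)%N by rewrite -ltnS.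
rewrite !hornerZ !hornerXn mulrCA cheb_joukowski //.
set j := (n - i)%N.
have -> : z ^+ (2 * n - m) * (a i * z ^+ (m - i)) = a i * z ^+ (i + j + j).
  by rewrite mulrCA -exprD; congr (_ * z ^+ _); lia.
have -> : n = (i + j)%N by lia.
have zi : z ^+ i != 0 by rewrite expf_neq0.
have zj : z ^+ j != 0 by rewrite expf_neq0.
by rewrite !exprD; field.
Qed.

Lemma TnA_root_joukowski (C : numFieldType) (m n : nat) (a : nat -> C) (z : C) :
  z != 0 -> (m <= n)%N -> root ('X^(2 * n - m) * PA m a + revPA m a) z ->
  root (TnA m n a) (joukowski z).
Proof.
move=> z0 mn /rootP F_z; apply/rootP/eqP.
move: F_z; rewrite -TnA_joukowski // => /eqP.
by rewrite !mulf_eq0 expf_eq0 (negPf z0) andbF orbF pnatr_eq0.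
Qed.

Lemma PA_coef_lead (R : nzRingType) (m : nat) (a : nat -> R) : (PA m a)`_m = a 0%N.
Proof.
rewrite /PA coef_sum big_ord_recl coefZ coefXn subn0 eqxx mulr1.
rewrite big1 ?addr0 // => i _; rewrite coefZ coefXn.
rewrite (_ : (m == m - bump 0 i)%N = false) ?mulr0 //.
by have := ltn_ord i; rewrite /bump /=; lia.
Qed.

Lemma expn_add_le_expSn (d j : nat) : (d ^ j + d ^ j.+1 <= d.+1 ^ j.+1)%N.
Proof.
have dj : (d ^ j <= d.+1 ^ j)%N by case: j => // j; rewrite leq_exp2r.
by rewrite !expnS mulSn leq_add // leq_mul.
Qed.

Lemma coef_far_roots (C : numDomainType) (c e : C) (bs : seq C) (k : nat) :
  0 < e -> {in bs, forall b, e <= `|b|} ->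
  let p := c *: \prod_(b <- bs) ('X - b%:P) in
  `|p`_k| * e ^+ k <= (size bs ^ k)%:R * `|p`_0|.
Proof.
move=> e0; elim: bs k => [|b bs IH] k far /=.
  rewrite big_nil alg_polyC !coefC; case: k => [|k] /=.
    by rewrite expr0 mulr1 expn0 mul1r.
  by rewrite normr0 mul0r exp0n // mul0r.
have far_b : e <= `|b| by apply: far; rewrite mem_head.
have {}IH : forall k, `|(c *: \prod_(b <- bs) ('X - b%:P))`_k| * e ^+ k <=
    (size bs ^ k)%:R * `|(c *: \prod_(b <- bs) ('X - b%:P))`_0|.
  by move=> i; apply: IH => x xbs; apply: far; rewrite inE xbs orbT.
rewrite big_cons scalerAr; set h := c *: \prod_(b <- bs) _ in IH *.
rewrite mulrBl !coefB !coefXM !coefCM eqxx sub0r normrN.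
case: k => [|j]; first by rewrite eqxx sub0r normrN expr0 mulr1 expn0 mul1r.
rewrite /= normrM; set d := size bs.
have step : `|h`_j - b * h`_j.+1| * e ^+ j.+1 <=
    e * (`|h`_j| * e ^+ j) + `|b| * (`|h`_j.+1| * e ^+ j.+1).
  rewrite (le_trans (ler_wpM2r (exprn_ge0 _ (ltW e0)) (ler_normB _ _))) //.
  by rewrite normrM mulrDl exprS mulrCA -mulrA.
apply: (le_trans step).
apply: (le_trans (y := `|b| * ((d ^ j + d ^ j.+1)%:R * `|h`_0|))).
  rewrite natrD mulrDl mulrDr lerD ?ler_wpM2l //.
  by rewrite ler_pM ?(ltW e0) ?mulr_ge0 ?normr_ge0 ?exprn_ge0 ?(ltW e0).
rewrite mulrCA ler_wpM2r ?mulr_ge0 ?normr_ge0 // ler_nat.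
exact: expn_add_le_expSn.
Qed.

Lemma leq_expn_base (m n k : nat) : (m <= n)%N -> (m ^ k <= n ^ k)%N.
Proof. by move=> mn; case: k => // k; rewrite leq_exp2r. Qed.

(* Contrapositive of coef_far_roots over an algebraically closed field:
   a large k-th coefficient relative to the constant term forces a root
   of modulus < e. *)
Lemma small_root_exists (C : numClosedFieldType) (p : {poly C}) (e : C) (d k : nat) :
  0 < e -> (size p <= d.+1)%N -> (d ^ k)%:R * `|p`_0| < `|p`_k| * e ^+ k ->
  exists2 z, root p z & `|z| < e.
Proof.
move=> e0 size_p big.
have p_neq0 : p != 0 by apply: contraTneq big => ->; rewrite !coef0 normr0 mulr0 mul0r ltxx.
have [rs p_split] := closed_field_poly_normal p.
have size_rs : (size rs <= d)%N.
  by move: size_p; rewrite p_split size_scale ?lead_coef_eq0 // size_prod_XsubC.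
have [/hasP[z z_rs z_small] | /hasPn far] := boolP (has (fun z => `|z| < e) rs).
  by exists z; rewrite // p_split rootZ ?lead_coef_eq0 // root_prod_XsubC.
have far' : {in rs, forall b, e <= `|b|}.
  by move=> b /far; rewrite real_leNgt ?normr_real ?gtr0_real.
have := coef_far_roots (lead_coef p) k e0 far'; rewrite -p_split => bound.
have bound' : `|p`_k| * e ^+ k <= (d ^ k)%:R * `|p`_0|.
  by rewrite (le_trans bound) // ler_wpM2r ?normr_ge0 // ler_nat leq_expn_base.
by have := lt_le_trans big bound'; rewrite ltxx.
Qed.

Lemma bernoulli_ineq (C : numDomainType) (y : C) (n : nat) :
  0 <= y -> 1 + n%:R * y <= (1 + y) ^+ n.
Proof.
move=> y0; elim: n => [|n IH]; first by rewrite mul0r addr0 expr0.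
rewrite exprSr (le_trans _ (ler_wpM2r _ IH)) ?addr_ge0 //.
have -> : (1 + n%:R * y) * (1 + y) = 1 + n.+1%:R * y + n%:R * (y * y).
  by rewrite -addn1 natrD; ring.
by rewrite lerDl mulr_ge0 ?ler0n ?mulr_ge0.
Qed.

(* t^n >= c n^j for some c > 0 when t > 1; induction on j, applying the
   hypothesis to sqrt t and Bernoulli to the remaining factor. *)
Lemma exp_dominates_poly (C : numClosedFieldType) (j : nat) (t : C) :
  1 < t -> exists2 c : C, 0 < c & forall n : nat, c * (n ^ j)%:R <= t ^+ n.
Proof.
elim: j t => [|j IH] t t1.
  by exists 1 => // n; rewrite expn0 mul1r exprn_ege1 ?ltW.
set s := sqrtC t.
have s0 : 0 <= s by rewrite sqrtC_ge0 (le_trans ler01) ?ltW.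
have s2 : s ^+ 2 = t by rewrite sqrtCK.
have s1 : 1 < s by rewrite -((expr_gte1 C).2 2%N s isT s0) s2.
have [c c0 hc] := IH s s1.
exists (c * (s - 1)) => [|n]; first by rewrite mulr_gt0 // subr_gt0.
have s1_ge0 : 0 <= s - 1 by rewrite subr_ge0 ltW.
have -> : c * (s - 1) * (n ^ j.+1)%:R = (c * (n ^ j)%:R) * (n%:R * (s - 1)).
  by rewrite expnSr natrM; ring.
rewrite -s2 -exprM mulnC exprM expr2 ler_pM ?mulr_ge0 ?ler0n ?(ltW c0) //.
have := bernoulli_ineq n s1_ge0; rewrite [1 + (s - 1)]addrC subrK; apply: le_trans.
by rewrite lerDr.
Qed.

Lemma exp_beats_poly (C : archiClosedFieldType) (t A B : C) (j : nat) :
  1 < t -> 0 < A -> 0 <= B ->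
  exists N0 : nat, forall N : nat, (N0 <= N)%N -> B * (N ^ j)%:R < A * t ^+ N.
Proof.
move=> t1 A0 B0; have [c c0 hc] := exp_dominates_poly j.+1 t1.
have Ac0 : 0 < A * c by rewrite mulr_gt0.
exists (Num.bound (B / (A * c))) => N hN.
have N_big : B < A * c * N%:R.
  rewrite -ltr_pdivrMl // mulrC (lt_le_trans (archi_boundP _)) ?ler_nat //.
  by rewrite divr_ge0 // ltW.
have N0 : (0 < N)%N.
  by rewrite -(ltr0n C) -(pmulr_rgt0 _ Ac0) (le_lt_trans B0 N_big).
have Nj0 : 0 < (N ^ j)%:R :> C by rewrite ltr0n expn_gt0 N0.
apply: (lt_le_trans (y := A * (c * (N ^ j.+1)%:R))); last by rewrite ler_wpM2l ?(ltW A0).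
have -> : A * (c * (N ^ j.+1)%:R) = A * c * N%:R * (N ^ j)%:R.
  by rewrite expnSr natrM; ring.
by rewrite ltr_pM2r.
Qed.

(* Shifting h (X - w)^k by w gives X^k h(X + w), whose k-th coefficient is h(w). *)
Lemma coef_shift_multiple (R : comNzRingType) (h : {poly R}) (w : R) (k : nat) :
  ((h * ('X - w%:P) ^+ k) \Po ('X + w%:P))`_k = h.[w].
Proof.
rewrite comp_polyM rmorphXn /= comp_polyB comp_polyX comp_polyC addrK coefMXn ltnn.
by rewrite subnn -horner_coef0 horner_comp hornerD hornerX hornerC add0r.
Qed.

Lemma root_near_of_XnP_add (C : archiClosedFieldType) (P R : {poly C}) (w e : C) :
  P != 0 -> root P w -> 1 < `|w| -> 0 < e ->
  exists N0 : nat, forall N : nat, (N0 <= N)%N ->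
    exists2 z, root ('X^N * P + R) z & `|z - w| < e.
Proof.
move=> P_neq0 Pw w1 e0.
have [k [q q_w P_eq]] := multiplicity_XsubC P w.
have q_w0 : q.[w] != 0 by move: q_w; rewrite P_neq0.
set X1 := 'X + w%:P; set s := (size P + size R)%N.
set R0 : C := `|R.[w]|; set rk : C := `|(R \Po X1)`_k|; set Q : C := `|q.[w]|.
have ek0 : 0 < e ^+ k by rewrite exprn_gt0.
have A0 : 0 < e ^+ k * Q by rewrite mulr_gt0 // normr_gt0.
have B0 : 0 <= 2%:R ^+ k * R0 + e ^+ k * rk.
  by rewrite addr_ge0 ?mulr_ge0 ?normr_ge0 ?exprn_ge0 ?ltW.
have [N1 beats] := exp_beats_poly k w1 A0 B0.
exists (maxn N1 (maxn s 1)) => N; rewrite !geq_max => /and3P[N1N sN N_gt0].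
set F := 'X^N * P + R; set g := F \Po X1.
have g0 : g`_0 = R.[w].
  by rewrite -horner_coef0 horner_comp !hornerE (rootP Pw) mulr0 add0r.
have gk : g`_k = w ^+ N * q.[w] + (R \Po X1)`_k.
  by rewrite /g /F comp_polyD coefD P_eq mulrA coef_shift_multiple hornerM hornerXn.
have size_g : (size g <= (N + s).+1)%N.
  rewrite size_comp_poly2 ?size_XaddC // (leq_trans (size_polyD _ _)) // geq_max.
  apply/andP; split; last by rewrite /s; move: (size P) (size R) => ? ?; lia.
  rewrite (leq_trans (size_polyMleq _ _)) // size_polyXn /s.
  by move: (size P) (size R) => ? ?; lia.
have Nk1 : 1 <= (N ^ k)%:R :> C by rewrite ler1n expn_gt0 N_gt0.
have lhs : ((N + s) ^ k)%:R * R0 + e ^+ k * rk <=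
    (2%:R ^+ k * R0 + e ^+ k * rk) * (N ^ k)%:R.
  rewrite mulrDl lerD ?ler_peMr ?mulr_ge0 ?normr_ge0 ?exprn_ge0 ?(ltW e0) //.
  rewrite mulrAC -natrX -natrM -expnMn ler_wpM2r ?normr_ge0 // ler_nat.
  by rewrite leq_expn_base //; lia.
have rhs : e ^+ k * Q * `|w| ^+ N <= e ^+ k * (`|g`_k| + rk).
  rewrite -mulrA ler_wpM2l ?exprn_ge0 ?(ltW e0) //.
  have -> : Q * `|w| ^+ N = `|g`_k - (R \Po X1)`_k| by rewrite gk addrK normrM normrX mulrC.
  exact: ler_normB.
have big : ((N + s) ^ k)%:R * `|g`_0| < `|g`_k| * e ^+ k.
  rewrite g0 -/R0 -(ltrD2r (e ^+ k * rk)) [_ * e ^+ k]mulrC -mulrDr.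
  exact: le_lt_trans lhs (lt_le_trans (beats N N1N) rhs).
have [z gz z_small] := small_root_exists e0 size_g big.
exists (z + w); last by rewrite addrK.
by move: gz; rewrite /g /F !rootE horner_comp /X1 !hornerE.
Qed.

(* Main theorem: apply the root-location lemma to X^(2n-m) P_A + R_A with a
   radius e <= min(eps, |w| - 1), which keeps the root z outside the unit
   disc, then map it to T_{n,A} by J. *)
Theorem theorem2p4 (C : archiClosedFieldType) (m : nat) (a : nat -> C)
    (hm : (1 <= m)%N)
    (hreal : forall i, (i <= m)%N -> a i \is Num.real)
    (ha0 : a 0%N != 0) (ham : a m != 0)
    (w : C) (hroot : root (PA m a) w) (hw : 1 < `|w|) :
  forall eps : C, 0 < eps ->
  exists n0 : nat, forall n : nat, (n0 < n)%N -> (m <= n)%N ->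
    exists xi : C, root (TnA m n a) xi /\
      `|xi - (w + w^-1) / 2%:R| < eps.
Proof.
move=> eps eps0.
have PA_neq0 : PA m a != 0.
  by apply: contraNneq ha0 => PA0; rewrite -(PA_coef_lead m a) PA0 coef0.
have [e [e0 e_eps e_w]] : exists e, [/\ 0 < e, e <= eps & e <= `|w| - 1].
  have w1 : 0 < `|w| - 1 by rewrite subr_gt0.
  case/orP: (real_leVge (gtr0_real eps0) (gtr0_real w1)) => [eps_w | w_eps].
    by exists eps.
  by exists (`|w| - 1).
have [N0 near_w] := root_near_of_XnP_add (revPA m a) PA_neq0 hroot hw e0.
exists (N0 + m)%N => n n_big mn.
have [z z_root z_near] : exists2 z, root ('X^(2 * n - m) * PA m a + revPA m a) z &
    `|z - w| < e by apply: near_w; lia.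
have z_gt1 : 1 < `|z|.
  have : `|w| <= `|z| + `|z - w| by rewrite distrC -{1}(subrKC z w) ler_normD.
  move=> w_le; rewrite -(ltrD2r `|z - w|) (lt_le_trans _ w_le) // -ltrBrDl.
  exact: lt_le_trans z_near e_w.
have z_neq0 : z != 0 by rewrite -normr_gt0 (lt_trans ltr01).
have w_neq0 : w != 0 by rewrite -normr_gt0 (lt_trans ltr01).
exists (joukowski z); split; first exact: TnA_root_joukowski.
apply: le_lt_trans (joukowski_dist z_neq0 w_neq0 _) (lt_le_trans z_near e_eps).
by rewrite normrM -[1]mulr1 ler_pM ?ltW.
Qed.
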